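(* For every $g\ge 3$, there exist graphs of girth $g$ that do not belong to CBU.
   Context: Let $e_1,\ldots,e_d$ be the standard basis of $\mathbb{R}^d$. For $d\ge 1$, a graph belongs to $d$-CBU if one can assign to each vertex an axis-parallel box (product of $d$ closed intervals of positive length) in $\mathbb{R}^d$ such that the boxes have pairwise disjoint interiors, two distinct vertices are adjacent iff their boxes intersect, and any two intersecting boxes intersect in a $(d-1)$-dimensional box orthogonal to $e_1$. CBU is the union of $d$-CBU over all $d\ge 1$. *)

From mathcomp Require Import all_boot.
From Stdlib Require Import Reals.

Set Implicit Arguments.
Unset Strict Implicit.
Unset Printing Implicit Defensive.

Definition simple_graph (T : finType) (e : rel T) : Prop :=
  symmetric e /\ irreflexive e.

Definition is_cycle_of_length (T : finType) (e : rel T) (s : seq T) (k : nat)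
  : Prop :=
  size s = k /\ (3 <= k)%N /\ uniq s /\ cycle e s.

Definition has_girth (T : finType) (e : rel T) (g : nat) : Prop :=
  (exists s, is_cycle_of_length e s g) /\
  (forall s k, is_cycle_of_length e s k -> (g <= k)%N).

(* d-CBU (for d >= 1): coordinates are indexed by i < d, coordinate 0
   corresponds to e_1.  Vertex v gets the box prod_{i<d} [lo v i, hi v i]. *)
Definition box_rep (T : finType) (e : rel T) (d : nat)
  (lo hi : T -> nat -> R) : Prop :=
  (forall v i, (i < d)%N -> (lo v i < hi v i)%R) /\
  (* pairwise disjoint interiors: some coordinate has disjoint open intervals *)
  (forall u v, u != v ->
     exists i, (i < d)%N /\ ((hi u i <= lo v i)%R \/ (hi v i <= lo u i)%R)) /\
  (forall u v, u != v ->
     (e u v <-> forall i, (i < d)%N ->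
                  (lo u i <= hi v i)%R /\ (lo v i <= hi u i)%R)) /\
  (* intersecting boxes meet in a (d-1)-dimensional box orthogonal to e_1:
     the intersection is a single point in coordinate 0 and has positive
     length in every other coordinate *)
  (forall u v, u != v ->
     (forall i, (i < d)%N -> (lo u i <= hi v i)%R /\ (lo v i <= hi u i)%R) ->
     Rmax (lo u 0) (lo v 0) = Rmin (hi u 0) (hi v 0) /\
     (forall i, (0 < i < d)%N ->
        (Rmax (lo u i) (lo v i) < Rmin (hi u i) (hi v i))%R)).

Definition in_dCBU (T : finType) (e : rel T) (d : nat) : Prop :=
  (1 <= d)%N /\ exists lo hi : T -> nat -> R, box_rep e d lo hi.

Definition in_CBU (T : finType) (e : rel T) : Prop :=
  exists d, in_dCBU e d.

(* Two boxes of a CBU representation can only meet in a hyperplane orthogonal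
   to e_1, so the first intervals of adjacent vertices u, v touch:
   hi u = lo v or hi v = lo u.  Colour the endpoint values at random; the
   vertices whose left endpoint is red and right endpoint blue form a stable set,
   of expected size |T|/4.  Hence every CBU graph has a stable set containing a
   quarter of its vertices.
   Conversely, by Erdos' deletion argument some graphs of girth at least g have
   no such stable set: in a random graph on 256 q vertices with edge
   probability 1/q, where q = 256^g, the expected number of cycles shorter than
   g, counted as vertex sequences, is below q, so with probability more than 1/2 there are fewer than 128 q of
   them, while a stable set of size 32 q appears with probability at most 1/2.
   Deleting one vertex from each short cycle leaves more than 128 q vertices
   and no stable set of size 32 q.
   A disjoint g-cycle then makes the girth exactly g. *)

From Stdlib Require Import Reals Lra ROrderedType.
From mathcomp Require Import all_boot zify.

Set Implicit Arguments.
Unset Strict Implicit.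
Unset Printing Implicit Defensive.

Lemma card_ffun_constrained (aT rT : finType) (A : {set aT}) (F : aT -> pred rT) :
  #|[set f : {ffun aT -> rT} | [forall x in A, F x (f x)]]| =
  (\prod_(x in A) #|F x|) * #|rT| ^ (#|aT| - #|A|).
Proof.
pose G x := if x \in A then F x else predT.
have -> : #|[set f : {ffun aT -> rT} | [forall x in A, F x (f x)]]| = #|family G|.
  apply: eq_card => f; rewrite inE; apply/forallP/familyP => fG x; have := fG x;
    by rewrite /G; case: (x \in A).
rewrite card_family /image_mem foldrE big_map big_enum /= (bigID (mem A)) /=.
congr (_ * _); first by apply: eq_bigr => x; rewrite /G => ->.
rewrite -(cardsC A) addKn -prod_nat_const; apply: eq_big => [x|x]; first by rewrite inE.
by rewrite /G => /negbTE ->; apply: eq_card.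
Qed.

Lemma sum_card_exchange (A B : finType) (P : A -> B -> bool) :
  \sum_(a : A) #|[set b | P a b]| = \sum_(b : B) #|[set a | P a b]|.
Proof.
under eq_bigr do rewrite -sum1_card big_mkcond.
under [RHS]eq_bigr do rewrite -sum1_card big_mkcond.
rewrite exchange_big; apply: eq_bigr => b _; apply: eq_bigr => a _.
by rewrite !inE.
Qed.

Lemma card_bigcup_leq (I T : finType) (P : pred I) (F : I -> {set T}) :
  #|\bigcup_(i | P i) F i| <= \sum_(i | P i) #|F i|.
Proof.
elim/big_rec2: _ => [|i x y _ IH]; first by rewrite cards0.
by apply: leq_trans (leq_card_setU _ _).1 _; rewrite leq_add2l.
Qed.

Lemma exists_ge_average (A : finType) (w : A -> nat) m :
  0 < #|A| -> #|A| * m <= \sum_a w a -> exists a, m <= w a.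
Proof.
move=> A_gt0 le_sum; apply/existsP; apply: contraLR A_gt0.
rewrite negb_exists -leqNgt => /forallP lt_w.
have : \sum_a (w a + 1) <= \sum_(a : A) m.
  by apply: leq_sum => a _; rewrite addn1 ltnNge.
by rewrite sum_nat_const big_split /= sum1_card -[#|xpredT|]/#|A|; lia.
Qed.

Lemma markov_card (A : finType) (w : A -> nat) c :
  #|[set a | c <= w a]| * c <= \sum_a w a.
Proof.
rewrite -sum1_card big_distrl /= [leqRHS](bigID (mem [set a | c <= w a])) /=.
by apply: leq_trans (leq_addr _ _); apply: leq_sum => a; rewrite inE mul1n.
Qed.

(** * Stable sets of CBU graphs *)

Definition stable (T : finType) (e : rel T) (I : {set T}) : Prop :=
  forall u v, u \in I -> v \in I -> u != v -> ~~ e u v.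

Lemma in_CBU_relpre (T T' : finType) (h : T' -> T) (e : rel T) :
  injective h -> in_CBU e -> in_CBU (relpre h e).
Proof.
move=> h_inj [d [d_gt0 [lo [hi [pos [disj [adj touch]]]]]]].
exists d; split => //; exists (lo \o h), (hi \o h).
split; first by move=> v; apply: pos.
split; [|split] => u v; rewrite -(inj_eq h_inj); [apply: disj|apply: adj|apply: touch].
Qed.

Section CanonicalRepresentative.
Variables (A : finType) (coord : A -> R).

Definition canon (a : A) : A := odflt a [pick b | Reqb (coord b) (coord a)].

Lemma canon_coord a : coord (canon a) = coord a.
Proof. by rewrite /canon; case: pickP => [b /Reqb_eq|]. Qed.

Lemma canon_eq a b : coord a = coord b -> canon a = canon b.
Proof.
move=> eq_ab; rewrite /canon (@eq_pick _ _ (fun c => Reqb (coord c) (coord b))).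
  by case: pickP => // /(_ b) /negP[]; apply/Reqb_eq.
by move=> c; rewrite eq_ab.
Qed.

End CanonicalRepresentative.

Lemma box_rep_touch (T : finType) (e : rel T) d lo hi :
  0 < d -> box_rep e d lo hi -> forall u v, u != v -> e u v ->
  hi u 0 = lo v 0 \/ hi v 0 = lo u 0.
Proof.
move=> d_gt0 [pos [_ [adj touch]]] u v uv /(adj u v uv) meet.
have [] := touch u v uv meet; have := pos u 0 d_gt0; have := pos v 0 d_gt0.
rewrite /Rmax /Rmin; do 2 case: Rle_dec; lra.
Qed.

Lemma card_ffun_false_true (U : finType) (a b : U) : a != b ->
  4 * #|[set X : {ffun U -> bool} | ~~ X a && X b]| = 2 ^ #|U|.
Proof.
move=> ab; pose F x : pred bool := fun y => y == (x != a).
transitivity (4 * ((\prod_(x in [set a; b]) #|F x|) * #|{: bool}| ^ (#|U| - #|[set a; b]|))).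
  congr (4 * _); rewrite -card_ffun_constrained; apply: eq_card => X; rewrite !inE.
  apply/andP/forall_inP => [[Xa Xb] x|FX].
    by rewrite !inE /F => /orP[] /eqP->; rewrite ?eqxx ?(negbTE Xa) // (eq_sym b) ab Xb.
  have := FX a; have := FX b; rewrite !inE !eqxx orbT /F /= (eq_sym b) ab.
  by rewrite eqxx => /(_ isT)/eqP Xb /(_ isT)/eqP Xa; rewrite Xa Xb.
rewrite (eq_bigr (fun=> 1)) => [|x _]; last exact: card1.
rewrite prod_nat_const exp1n mul1n card_bool.
have := max_card [set a; b]; rewrite cards2 ab => /subnKC {2}<-.
by rewrite expnD mulnC.
Qed.

Lemma in_CBU_large_stable (T : finType) (e : rel T) : in_CBU e ->
  exists I : {set T}, stable e I /\ #|T| <= 4 * #|I|.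
Proof.
move=> [d [d_gt0 [lo [hi rep]]]].
pose ends (p : T * bool) := if p.2 then hi p.1 0 else lo p.1 0.
(* A colouring X of T * bool colours the real value [ends p] by [X (canon ends p)],
   which only depends on that value. *)
pose a v := canon ends (v, false); pose b v := canon ends (v, true).
pose I (X : {ffun T * bool -> bool}) := [set v | ~~ X (a v) && X (b v)].
have I_stable X : stable e (I X).
  move=> u v; rewrite !inE => /andP[Xau Xbu] /andP[Xav Xbv] uv; apply/negP.
  case/(box_rep_touch d_gt0 rep uv) => [touch_uv|touch_vu].
    by move: Xbu; rewrite /b (@canon_eq _ ends (u, true) (v, false)) // (negbTE Xav).
  by move: Xbv; rewrite /b (@canon_eq _ ends (v, true) (u, false)) // (negbTE Xau).
have ab v : a v != b v.
  apply/eqP => /(congr1 ends); rewrite !canon_coord /ends /= => lo_hi.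
  have lo_lt_hi := proj1 rep v 0 d_gt0; lra.
have [X le_X] : exists X, #|T| <= 4 * #|I X|.
  apply: exists_ge_average; first by rewrite card_ffun card_bool expn_gt0.
  rewrite -big_distrr /= sum_card_exchange big_distrr /=.
  rewrite (eq_bigr _ (fun v _ => card_ffun_false_true (ab v))).
  by rewrite sum_nat_const card_ffun card_bool mulnC.
by exists (I X).
Qed.

(** * Cycle graphs and disjoint unions *)

Lemma next_neq_prev (T : eqType) (s : seq T) x :
  uniq s -> 2 < size s -> x \in s -> next s x != prev s x.
Proof.
move=> s_uniq s_gt2 /rot_to[i r rot_s]; apply/eqP => next_prev_x.
have := next_prev s_uniq x; rewrite -next_prev_x -!(next_rot i s_uniq) rot_s.
have : uniq (x :: r) by rewrite -rot_s rot_uniq.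
have : 2 < size (x :: r) by rewrite -rot_s size_rot.
case: r {rot_s next_prev_x} => [|y [|z r]] //= _ /and3P[/norP[xy /norP[xz _]] _ _].
by rewrite eqxx eq_sym (negbTE xy) eqxx => /eqP; rewrite eq_sym (negbTE xz).
Qed.

Definition girth_ge (T : finType) (e : rel T) (g : nat) : Prop :=
  forall s k, is_cycle_of_length e s k -> g <= k.

Lemma is_cycle_of_length_map (T T' : finType) (h : T' -> T) (e : rel T) s k :
  injective h -> is_cycle_of_length e (map h s) k <-> is_cycle_of_length (relpre h e) s k.
Proof. by move=> h_inj; rewrite /is_cycle_of_length size_map map_inj_uniq // cycle_map. Qed.

Section CycleGraph.
Variable g : nat.

Definition cycle_rel : rel 'I_g := fun i j => (j == ordS i) || (i == ordS j).

Lemma iter_ordS k (i : 'I_g) : val (iter k (@ordS g) i) = (i + k) %% g.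
Proof.
elim: k => [|k IHk] /=; first by rewrite addn0 modn_small.
by rewrite IHk -addn1 modnDml addn1 addnS.
Qed.

Lemma iter_ordS_onto (i j : 'I_g) : iter (j + g - i) (@ordS g) i = j.
Proof.
apply: val_inj; rewrite iter_ordS /=.
have -> : i + (j + g - i) = j + g by have := ltn_ord i; lia.
by rewrite modnDr modn_small.
Qed.

Lemma order_ordS (i : 'I_g) : order (@ordS g) i = g.
Proof.
rewrite /order -[RHS]card_ord; apply: eq_card => j.
by rewrite -(iter_ordS_onto i j); apply: fconnect_iter.
Qed.

Lemma cycle_rel_orbit (i : 'I_g) : cycle cycle_rel (orbit (@ordS g) i).
Proof.
apply: sub_cycle (cycle_orbit (@ordS_inj g) i) => j k /eqP <-.
by rewrite /cycle_rel /= eqxx.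
Qed.

Lemma cycle_rel_cycle_size (s : seq 'I_g) :
  uniq s -> 2 < size s -> cycle cycle_rel s -> g <= size s.
Proof.
move=> s_uniq s_gt2 s_cycle.
have ordS_s x : x \in s -> ordS x \in s.
  move=> xs; have := next_neq_prev s_uniq s_gt2 xs.
  have := next_cycle s_cycle xs; have := prev_cycle s_cycle xs.
  case/orP=> [/eqP x_prev|/eqP <-]; last by rewrite mem_prev.
  case/orP=> [/eqP <-|/eqP x_next]; first by rewrite mem_next.
  by rewrite (ordS_inj (etrans (esym x_prev) x_next)) eqxx.
have [x0 x0s] : exists x0, x0 \in s.
  by case: s s_gt2 {s_uniq s_cycle ordS_s} => // x0; exists x0; rewrite mem_head.
rewrite -[leqLHS](size_enum_ord g); apply: uniq_leq_size (enum_uniq _) _ => y _.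
rewrite -(iter_ordS_onto x0 y); elim: (_ - _) => //= k; exact: ordS_s.
Qed.

Lemma cycle_rel_simple : 1 < g -> simple_graph cycle_rel.
Proof.
move=> g_gt1; split=> [i j|i]; first by rewrite /cycle_rel orbC.
rewrite /cycle_rel orbb; apply/eqP => /(congr1 val) /=.
have := ltn_ord i; move: (nat_of_ord i) => k k_lt.
have [k1_lt|k1_ge] := ltnP k.+1 g; first by rewrite modn_small //; lia.
have -> : k.+1 = g by lia.
by rewrite modnn; lia.
Qed.

Lemma cycle_rel_girth : 2 < g -> has_girth cycle_rel g.
Proof.
move=> g_gt2; have i : 'I_g := Ordinal (ltnW (ltnW g_gt2)); split.
  exists (orbit (@ordS g) i); split; first by rewrite size_orbit order_ordS.
  by split; [|split; [exact: orbit_uniq|exact: cycle_rel_orbit]].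
by move=> s k [<- [k_gt2 [s_uniq s_cycle]]]; apply: cycle_rel_cycle_size.
Qed.

End CycleGraph.

Section SumGraph.
Variables (A B : finType) (ea : rel A) (eb : rel B).

Definition sum_rel : rel (A + B) := fun x y =>
  match x, y with
  | inl a, inl a' => ea a a'
  | inr b, inr b' => eb b b'
  | _, _ => false
  end.

Lemma sum_rel_simple : simple_graph ea -> simple_graph eb -> simple_graph sum_rel.
Proof.
move=> [ea_sym ea_irr] [eb_sym eb_irr].
by split=> [[a|b] [a'|b']|[a|b]] //=; rewrite ?ea_sym ?eb_sym ?ea_irr ?eb_irr.
Qed.

Definition is_inl (x : A + B) := if x is inl _ then true else false.

Lemma path_sum_rel x p : path sum_rel x p -> all (fun y => is_inl y == is_inl x) p.
Proof.
elim: p x => //= y p IHp x /andP[xy /IHp].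
have -> : is_inl y = is_inl x by case: x y xy => ? [].
by rewrite eqxx.
Qed.

Lemma cycle_sum_rel s : cycle sum_rel s ->
  (exists sa, s = map inl sa) \/ (exists sb, s = map inr sb).
Proof.
case: s => [|x s]; first by left; exists [::].
move=> /path_sum_rel; rewrite all_rcons eqxx /=.
case: x => [a|b] s_side.
  left; exists (a :: pmap (fun y => if y is inl a then Some a else None) s).
  by congr (_ :: _); elim: s s_side => //= -[a'|b'] s IHs /andP[] //= _ /IHs <-.
right; exists (b :: pmap (fun y => if y is inr b then Some b else None) s).
by congr (_ :: _); elim: s s_side => //= -[a'|b'] s IHs /andP[] //= _ /IHs <-.
Qed.

Lemma sum_rel_girth g : girth_ge ea g -> has_girth eb g -> has_girth sum_rel g.
Proof.
have inl_inj : injective (@inl A B) by move=> ? ? [].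
have inr_inj : injective (@inr A B) by move=> ? ? [].
move=> ea_girth [[sb sb_cycle] eb_girth]; split.
  by exists (map inr sb); apply/(is_cycle_of_length_map _ _ _ inr_inj).
move=> s k s_cycle.
have [[sa s_sa]|[sb' s_sb]] := cycle_sum_rel (proj2 (proj2 (proj2 s_cycle))).
  by apply: (ea_girth sa); apply/(is_cycle_of_length_map sum_rel _ _ inl_inj); rewrite -s_sa.
by apply: (eb_girth sb'); apply/(is_cycle_of_length_map sum_rel _ _ inr_inj); rewrite -s_sb.
Qed.

End SumGraph.

(** * Random graphs of large girth *)

Lemma bernoulli_expn m k : m ^ k.+1 + k.+1 * m ^ k <= m.+1 ^ k.+1.
Proof.
elim: k => [|k IHk]; first by rewrite muln1 addn1.
apply: leq_trans (_ : m.+1 * (m ^ k.+1 + k.+1 * m ^ k) <= _).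
  by rewrite !expnS; nia.
by rewrite (expnS m.+1 k.+1) leq_mul2l IHk orbT.
Qed.

(* (m / (m + 1)) ^ K <= 2 ^ -k whenever K >= (m + 1) k, cleared of denominators. *)
Lemma leq_expn_pred_ratio m k K N : m.+1 * k <= K -> K <= N ->
  2 ^ k * (m ^ K * m.+1 ^ (N - K)) <= m.+1 ^ N.
Proof.
move=> /subnKC <-; move: (K - _) => r /subnKC <-; move: (N - _) => s.
have half_m : 2 * m ^ m.+1 <= m.+1 ^ m.+1.
  by apply: leq_trans (bernoulli_expn m m); rewrite expnS; nia.
have half_mk : 2 ^ k * m ^ (m.+1 * k) <= m.+1 ^ (m.+1 * k).
  by rewrite !expnM -expnMn; case: k => // k; rewrite leq_exp2r.
have le_mr : m ^ r <= m.+1 ^ r by case: r => // r; rewrite leq_exp2r.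
move: (m.+1 * k) half_mk => a half_a.
by rewrite addKn !expnD !mulnA leq_mul2r leq_mul ?orbT.
Qed.

Lemma sum_expn_lt b g : 1 < b -> \sum_(l < g) b ^ l < b ^ g.
Proof.
move=> b_gt1; elim: g => [|g IHg]; first by rewrite big_ord0.
rewrite big_ord_recr /= expnS -addSn; apply: leq_trans (leq_add IHg (leqnn _)) _.
by rewrite addnn -mul2n leq_mul2r b_gt1 orbT.
Qed.

Lemma weighted_cycle_sum_lt b q g N : 1 < b -> 0 < q -> g <= N ->
  \sum_(l < g | 2 < l) (b * q) ^ l * q ^ (N - l) < b ^ g * q ^ N.
Proof.
move=> b_gt1 q_gt0 le_gN; apply: (@leq_ltn_trans (\sum_(l < g) b ^ l * q ^ N)).
  rewrite [leqRHS](bigID (fun l : 'I_g => 2 < l)) /= (leq_trans _ (leq_addr _ _)) //.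
  apply: leq_sum => l _; rewrite expnMn -mulnA -expnD subnKC //.
  exact: ltnW (leq_trans (ltn_ord l) le_gN).
by rewrite -big_distrl /= ltn_pmul2r ?expn_gt0 ?q_gt0 // sum_expn_lt.
Qed.

Definition short_cycles (T : finType) (e : rel T) (g : nat) : nat :=
  \sum_(l < g | 2 < l) #|[set s : l.-tuple T | uniq s && cycle e s]|.

Section RandomGraph.
Variables (m n : nat).
Local Notation q := m.+1.
Local Notation V := 'I_n.+1.
Local Notation N := #|{: V * V}|.
Local Notation labelling := {ffun V * V -> 'I_q}.
Implicit Types (f : labelling) (S : {set V}).

Definition key (i j : V) : V * V := if i < j then (i, j) else (j, i).

(* A labelling is a point of the sample space: the pair {i, j} is an edge iff
   its label is 0, so edges are independent of probability 1/q, and counting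
   labellings computes probabilities. *)

Definition label_graph f : rel V := fun i j => (i != j) && (f (key i j) == ord0).

Lemma key_sym i j : key i j = key j i.
Proof. by rewrite /key; case: ltngtP => // /val_inj ->. Qed.

Lemma eq_key i j i' j' : key i j = key i' j' -> (i = i' /\ j = j') \/ (i = j' /\ j = i').
Proof. by rewrite /key; do 2 case: ifP => _; case=> -> ->; auto. Qed.

Lemma label_graph_simple f : simple_graph (label_graph f).
Proof. by split=> [i j|i]; rewrite /label_graph ?eqxx // eq_sym key_sym. Qed.

Lemma card_cycle_labellings (s : seq V) : uniq s -> 2 < size s ->
  #|[set f | cycle (label_graph f) s]| <= q ^ (N - size s).
Proof.
move=> s_uniq s_gt2; pose A := [set key x (next s x) | x in s].
have card_A : #|A| = size s.
  rewrite card_in_imset; first exact/card_uniqP.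
  move=> x y xs ys /eq_key[[] //|[x_eq y_eq]]; have := next_neq_prev s_uniq s_gt2 ys.
  by rewrite -{2}y_eq (prev_next s_uniq) -x_eq eqxx.
apply: leq_trans (_ : _ <= #|[set f : labelling | [forall x in A, f x == ord0]]|) _.
  apply/subset_leq_card/subsetP => f; rewrite !inE => f_cycle.
  by apply/forall_inP => _ /imsetP[x xs ->]; have /andP[] := next_cycle f_cycle xs.
rewrite (card_ffun_constrained A (fun _ => pred1 ord0)) big1 ?mul1n => [|x _]; last first.
  exact: card1.
by rewrite card_ord card_A.
Qed.

Lemma sum_short_cycles g :
  \sum_f short_cycles (label_graph f) g <= \sum_(l < g | 2 < l) n.+1 ^ l * q ^ (N - l).
Proof.
rewrite exchange_big /=; apply: leq_sum => l l_gt2.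
have -> : n.+1 ^ l = #|{: l.-tuple V}| by rewrite card_tuple card_ord.
rewrite sum_card_exchange -sum_nat_const.
apply: leq_sum => s _; case: (boolP (uniq s)) => [s_uniq|_]; last first.
  by rewrite (_ : [set f | _] = set0) ?cards0 //; apply/setP => f; rewrite !inE.
rewrite -{2}(size_tuple s); apply: leq_trans (card_cycle_labellings s_uniq _).
  by apply/subset_leq_card/subsetP => f; rewrite !inE.
by rewrite size_tuple.
Qed.

Lemma card_labellings_many_short_cycles g c :
  2 * \sum_(l < g | 2 < l) n.+1 ^ l * q ^ (N - l) < c * q ^ N ->
  2 * #|[set f | c <= short_cycles (label_graph f) g]| < q ^ N.
Proof.
move=> lt_sum; have c_gt0 : 0 < c by case: c lt_sum.
rewrite -(ltn_pmul2r c_gt0) -mulnA (mulnC (q ^ N)).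
apply: leq_ltn_trans lt_sum; rewrite leq_mul2l.
by rewrite (leq_trans (markov_card _ _)) ?sum_short_cycles ?orbT.
Qed.

Definition pairs S : {set V * V} := [set x in setX S S | x.1 < x.2].

Definition nonzero_on f (P : {set V * V}) : bool := [forall x in P, f x != ord0].

Lemma card_pairs S : 2 * #|pairs S| + #|S| = #|S| * #|S|.
Proof.
pose X := setX S S.
pose L := [set x : V * V | x.1 < x.2]; pose G := [set x : V * V | x.2 < x.1].
have XL : X :&: L = pairs S by apply/setP => x; rewrite !inE andbC.
have XG : (X :\: L) :&: G = (fun x : V * V => (x.2, x.1)) @^-1: pairs S.
  by apply/setP => -[i j]; rewrite !inE /=; case: ltngtP; case: (i \in S); case: (j \in S).
have Xdiag : (X :\: L) :\: G = (fun i : V => (i, i)) @: S.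
  apply/setP => -[i j]; rewrite !inE /=; apply/idP/imsetP => [|[k kS [-> ->]]].
    case/and4P => ji ij iS jS; exists i => //.
    by congr (_, _); apply/val_inj/anti_leq; rewrite leqNgt ij leqNgt ji.
  by rewrite ltnn kS.
have := cardsID L X; have := cardsID G (X :\: L).
rewrite XL XG Xdiag cardsX card_preimset => [|[i j] [i' j'] [-> ->]] //.
by rewrite card_imset => [|i j [->]] //; move=> <-; rewrite addnA addnn -mul2n.
Qed.

Lemma stable_nonzero_on_pairs f S : stable (label_graph f) S -> nonzero_on f (pairs S).
Proof.
move=> S_stable; apply/forall_inP => -[i j]; rewrite !inE /= => /andP[/andP[iS jS] lt_ij].
have ij : i != j by apply: contraTneq lt_ij => ->; rewrite ltnn.
by have := S_stable i j iS jS ij; rewrite /label_graph /key ij lt_ij.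
Qed.

Lemma card_nonzero_on_pairs S :
  #|[set f : labelling | nonzero_on f (pairs S)]| = m ^ #|pairs S| * q ^ (N - #|pairs S|).
Proof.
rewrite /nonzero_on (card_ffun_constrained _ (fun _ => predC1 ord0)) card_ord.
by rewrite (eq_bigr (fun _ => m)) ?prod_nat_const // => x _; rewrite cardC1 card_ord.
Qed.

Lemma card_nonzero_on_some_pairs t K : 2 * K + t = t * t ->
  #|[set f : labelling | [exists S : {set V}, (#|S| == t) && nonzero_on f (pairs S)]]|
    <= 2 ^ n.+1 * (m ^ K * q ^ (N - K)).
Proof.
move=> tK.
have -> : [set f : labelling | [exists S : {set V}, (#|S| == t) && nonzero_on f (pairs S)]] =
          \bigcup_(S : {set V} | #|S| == t) [set f : labelling | nonzero_on f (pairs S)].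
  apply/setP => f; rewrite inE; apply/existsP/bigcupP => [[S /andP[St fS]]|[S St fS]].
    by exists S; rewrite ?inE.
  by exists S; rewrite St; rewrite inE in fS.
apply: leq_trans (card_bigcup_leq _ _) _.
rewrite (eq_bigr (fun _ => m ^ K * q ^ (N - K))) => [|S /eqP St]; last first.
  by rewrite card_nonzero_on_pairs (_ : #|pairs S| = K) //; have := card_pairs S; rewrite St; lia.
have -> : 2 ^ n.+1 = #|powerset [set: V]| by rewrite card_powerset cardsT card_ord.
rewrite sum_nat_const leq_mul2r.
by rewrite subset_leq_card ?orbT //; apply/subsetP => S _; rewrite powersetE subsetT.
Qed.

Lemma exists_labelling_few_short_cycles g c t K :
  2 * \sum_(l < g | 2 < l) n.+1 ^ l * q ^ (N - l) < c * q ^ N ->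
  2 * K + t = t * t -> q * n.+2 <= K -> K <= N ->
  exists f, short_cycles (label_graph f) g < c /\ forall S, stable (label_graph f) S -> #|S| < t.
Proof.
move=> lt_cycles tK le_qK le_KN.
set B1 := [set f : labelling | c <= short_cycles (label_graph f) g].
set B2 := [set f : labelling |
           [exists S : {set V}, (#|S| == t) && nonzero_on f (pairs S)]].
have card_B1 : 2 * #|B1| < q ^ N := card_labellings_many_short_cycles lt_cycles.
have card_B2 : 2 * #|B2| <= q ^ N.
  apply: leq_trans (leq_expn_pred_ratio le_qK le_KN); rewrite expnS -mulnA leq_mul2l.
  by rewrite card_nonzero_on_some_pairs ?orbT.
have /card_gt0P[f] : 0 < #|~: (B1 :|: B2)|.
  have := cardsC (B1 :|: B2); move: card_B1 card_B2.
  rewrite card_ffun card_ord !card_prod !card_ord; have := (leq_card_setU B1 B2).1; lia.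
rewrite !inE negb_or => /andP[f_few f_no_stable].
exists f; split=> [|S S_stable]; first by rewrite ltnNge.
rewrite ltnNge; apply: contra f_no_stable => le_tS.
have /card_gt0P[S'] : 0 < #|[set S' : {set V} | S' \subset S & #|S'| == t]|.
  by rewrite cards_draws bin_gt0.
rewrite inE => /andP[sub_S'S card_S']; apply/existsP; exists S'; rewrite card_S'.
by apply: stable_nonzero_on_pairs => u v /(subsetP sub_S'S) uS /(subsetP sub_S'S); apply: S_stable.
Qed.

End RandomGraph.

Section DeleteShortCycles.
Variables (n : nat) (e : rel 'I_n.+1) (g : nat).

Definition short_cycle_heads : {set 'I_n.+1} :=
  \bigcup_(l < g | 2 < l)
     [set head ord0 (tval s) | s in [set s : l.-tuple 'I_n.+1 | uniq s && cycle e s]].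

Lemma card_short_cycle_heads : #|short_cycle_heads| <= short_cycles e g.
Proof.
apply: leq_trans (card_bigcup_leq _ _) _; apply: leq_sum => l _; exact: leq_imset_card.
Qed.

Definition delete_heads_rel : rel {v | v \notin short_cycle_heads} := relpre val e.

Lemma delete_heads_girth : girth_ge delete_heads_rel g.
Proof.
move=> s k s_cycle; rewrite leqNgt; apply/negP => lt_kg.
have [size_s [k_gt2 [s_uniq s_cycle']]] := proj2 (is_cycle_of_length_map _ _ _ val_inj) s_cycle.
have lt_sg : size (map val s) < g by rewrite size_s.
case: s {s_cycle} size_s s_uniq s_cycle' lt_sg => [|v s] size_s s_uniq s_cycle' lt_sg.
  by rewrite -size_s in k_gt2.
apply: (negP (valP v)); apply/bigcupP; exists (Ordinal lt_sg); first by rewrite -size_s in k_gt2.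
by apply/imsetP; exists (in_tuple (map val (v :: s))); rewrite // inE s_uniq.
Qed.

End DeleteShortCycles.

Lemma exists_graph_few_short_cycles_small_stable g :
  exists n (e : rel 'I_n.+1), simple_graph e /\
    forall S, stable e S -> 4 * #|S| + short_cycles e g < n.+1.
Proof.
have [m q_eq] : exists m, 256 ^ g = m.+1 by exists (256 ^ g).-1; rewrite prednK // expn_gt0.
pose n := (256 * m.+1).-1.
have n_eq : n.+1 = 256 * m.+1 by rewrite prednK // muln_gt0.
have g_lt_q : g < m.+1 by rewrite -q_eq ltn_expl.
have [f [few_cycles no_stable]] : exists f : {ffun 'I_n.+1 * 'I_n.+1 -> 'I_m.+1},
    short_cycles (label_graph f) g < 128 * m.+1 /\
    forall S, stable (label_graph f) S -> #|S| < 32 * m.+1.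
  apply: (@exists_labelling_few_short_cycles _ _ _ _ _ (16 * m.+1 * (32 * m + 31))).
  all: rewrite ?card_prod ?card_ord.
  - have le_gN : g <= n.+1 * n.+1 by rewrite n_eq; nia.
    move: (n.+1 * n.+1) le_gN => N le_gN; rewrite n_eq.
    by have := weighted_cycle_sum_lt (isT : 1 < 256) (ltn0Sn m) le_gN; rewrite q_eq; nia.
  - nia.
  - rewrite n_eq; nia.
  - rewrite n_eq; nia.
exists n, (label_graph f); split; first exact: label_graph_simple.
by move=> S /no_stable; lia.
Qed.

Lemma exists_girth_ge_small_stable g :
  exists (T : finType) (e : rel T), simple_graph e /\ girth_ge e g /\
    forall I : {set T}, stable e I -> 4 * #|I| < #|T|.
Proof.
have [n [e [[e_sym e_irr] small_stable]]] := exists_graph_few_short_cycles_small_stable g.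
exists {v | v \notin short_cycle_heads e g}, (@delete_heads_rel _ e g).
split; first by split=> [u v|v]; [apply: e_sym|apply: e_irr].
split; first exact: delete_heads_girth.
move=> I I_stable.
have val_stable : stable e (val @: I).
  move=> _ _ /imsetP[u uI ->] /imsetP[v vI ->].
  by rewrite (inj_eq val_inj); apply: I_stable.
have compl := cardsC (short_cycle_heads e g); rewrite card_ord in compl.
have := small_stable _ val_stable; rewrite card_imset; last exact: val_inj.
move/(leq_ltn_trans (leq_add (leqnn _) (card_short_cycle_heads e g))).
rewrite -[X in _ < X]compl addnC ltn_add2l => lt_I.
by rewrite card_sig; apply: leq_trans lt_I (eq_leq (eq_card _)) => v; rewrite !inE.
Qed.

Theorem mainTheorem13 (g : nat) :
  (3 <= g)%N ->
  exists (T : finType) (e : rel T),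
    simple_graph e /\ has_girth e g /\ ~ in_CBU e.
Proof.
move=> g_ge3; have [T [e [e_simple [e_girth e_small]]]] := exists_girth_ge_small_stable g.
have inl_inj : injective (@inl T 'I_g) by move=> ? ? [].
exists (T + 'I_g)%type, (sum_rel e (@cycle_rel g)); split; [|split].
- exact: sum_rel_simple e_simple (cycle_rel_simple (ltnW g_ge3)).
- exact: sum_rel_girth e_girth (cycle_rel_girth g_ge3).
- move=> /(in_CBU_relpre inl_inj) /in_CBU_large_stable[I [I_stable le_T_I]].
  by have := e_small I I_stable; rewrite ltnNge le_T_I.
Qed.
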